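(* Let $G=(V,E)$ be a claw-free graph and $I$ a maximum cardinality independent set of $G$. Assume there exist a minimum independent dominating set $D$ of $G$ and a pack $X$ with $|D\cap X|>1$. Then there exists a minimum independent dominating set $D'$ of $G$ with $D'\cap I\neq\emptyset$.
   Context: Graphs are finite, simple, undirected; claw-free means no induced $K_{1,3}$. An independent dominating set is an independent set $S$ such that every vertex outside $S$ has a neighbour in $S$; a minimum independent dominating set is one of minimum cardinality. For $a\ne b$ in $I$ let $V_{a,b}=\{v\in V\setminus I: N(v)\cap I=\{a,b\}\}$, and for $a\in I$ let $V_a=\{v\in V\setminus I : N(v)\cap I=\{a\}\}$; these sets are called packs. *)

From mathcomp Require Import all_boot.
Set Implicit Arguments. Unset Strict Implicit. Unset Printing Implicit Defensive.

Definition simple_graph (T : finType) (e : rel T) : Prop :=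
  symmetric e /\ irreflexive e.

Definition nbhd (T : finType) (e : rel T) (v : T) : {set T} := [set u | e v u].

Definition claw_free (T : finType) (e : rel T) : Prop :=
  forall c x y z : T, e c x -> e c y -> e c z ->
    x != y -> x != z -> y != z ->
    e x y || e x z || e y z.

Definition independent (T : finType) (e : rel T) (S : {set T}) : Prop :=
  forall x y, x \in S -> y \in S -> ~~ e x y.

Definition maximum_independent (T : finType) (e : rel T) (S : {set T}) : Prop :=
  independent e S /\ forall S' : {set T}, independent e S' -> #|S'| <= #|S|.

Definition dominating (T : finType) (e : rel T) (S : {set T}) : Prop :=
  forall v, v \notin S -> exists2 u, u \in S & e v u.

Definition independent_dominating (T : finType) (e : rel T) (S : {set T}) : Prop :=
  independent e S /\ dominating e S.

Definition min_independent_dominating (T : finType) (e : rel T) (S : {set T}) : Prop :=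
  independent_dominating e S /\
  forall S' : {set T}, independent_dominating e S' -> #|S| <= #|S'|.

Definition pack2 (T : finType) (e : rel T) (I : {set T}) (a b : T) : {set T} :=
  [set v | (v \notin I) && (nbhd e v :&: I == [set a; b])].

Definition pack1 (T : finType) (e : rel T) (I : {set T}) (a : T) : {set T} :=
  [set v | (v \notin I) && (nbhd e v :&: I == [set a])].

Definition is_pack (T : finType) (e : rel T) (I X : {set T}) : Prop :=
  (exists a b, [/\ a \in I, b \in I, a != b & X = pack2 e I a b]) \/
  (exists2 a, a \in I & X = pack1 e I a).

From mathcomp Require Import all_boot zify.

Set Implicit Arguments.
Unset Strict Implicit.
Unset Printing Implicit Defensive.

(* Take two non-adjacent vertices x, y of D in the pack X. A pack V_a is a
   clique when I is maximum, since otherwise (I \ {a}) + {x, y} would be a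
   larger independent set. So X = V_{a,b}, and we replace {x, y} by {a, b} in D.
   No other vertex of D sees a or b, as it would form a claw centred there with
   x and y; and a vertex dominated only through x (or y) sees a or b, as it
   would otherwise form a claw centred at x with a and b. *)

Lemma card_exchange2 (T : finType) (D : {set T}) x y a b :
  x \in D -> y \in D -> x != y -> #|D :\: [set x; y] :|: [set a; b]| <= #|D|.
Proof.
move=> xD yD xy.
have xyD : [set x; y] \subset D by apply/subsetP => u /set2P [] ->.
rewrite cardsU cardsDS // !cards2 xy.
have := subset_leq_card xyD; rewrite cards2 xy.
case: (a != b); lia.
Qed.

Section IndependentSets.

Variables (T : finType) (e : rel T).
Hypothesis e_sym : symmetric e.
Hypothesis e_irr : irreflexive e.

Lemma independentS (S U : {set T}) :
  S \subset U -> independent e U -> independent e S.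
Proof. by move=> /subsetP sSU indU x y /sSU xU /sSU yU; apply: indU. Qed.

Lemma independent_set2 x y : ~~ e x y -> independent e [set x; y].
Proof.
move=> nxy p q; rewrite !inE => /orP [] /eqP -> /orP [] /eqP ->;
  by rewrite ?e_irr // e_sym.
Qed.

Lemma independentU (S U : {set T}) :
  independent e S -> independent e U ->
  (forall p q, p \in S -> q \in U -> ~~ e p q) -> independent e (S :|: U).
Proof.
move=> indS indU cross p q /setUP [pS | pU] /setUP [qS | qU].
- exact: indS.
- exact: cross.
- by rewrite e_sym; apply: cross.
- exact: indU.
Qed.

Lemma mem_pack1 I a v :
  v \in pack1 e I a -> v \notin I /\ {in I, forall i, e v i = (i == a)}.
Proof.
rewrite inE => /andP [vI /eqP nbhdE]; split => // i iI.
by move/setP/(_ i): nbhdE; rewrite !inE iI andbT.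
Qed.

Lemma mem_pack2 I a b v :
  v \in pack2 e I a b -> v \notin I /\ {in I, forall i, e v i = (i \in [set a; b])}.
Proof.
rewrite inE => /andP [vI /eqP nbhdE]; split => // i iI.
by move/setP/(_ i): nbhdE; rewrite !inE iI andbT.
Qed.

Lemma pack1_clique I a x y :
  maximum_independent e I -> a \in I ->
  x \in pack1 e I a -> y \in pack1 e I a -> x != y -> e x y.
Proof.
move=> [indI maxI] aI /mem_pack1 [xI xN] /mem_pack1 [yI yN] xy.
apply/negPn/negP => nxy.
have cross p q : p \in I :\ a -> q \in [set x; y] -> ~~ e p q.
  by rewrite !inE => /andP [pa pI] /orP [] /eqP ->; rewrite e_sym ?xN ?yN.
have indI' : independent e (I :\ a :|: [set x; y]).
  apply: independentU cross; last exact: independent_set2.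
  exact: independentS (subsetDl I [set a]) indI.
have disj : (I :\ a) :&: [set x; y] = set0.
  apply/setP => z; rewrite !inE; apply/negbTE/andP => -[/andP [_ zI]].
  by case/orP=> /eqP zE; move: zI; rewrite zE ?(negbTE xI) ?(negbTE yI).
move: (maxI _ indI'); rewrite cardsU disj cards0 subn0 cards2 xy (cardsD1 a I) aI.
lia.
Qed.

Hypothesis claw : claw_free e.

Lemma claw_free_independent_nbrs (S : {set T}) c x y u :
  independent e S -> x \in S -> y \in S -> u \in S -> x != y ->
  e c x -> e c y -> e c u -> u \in [set x; y].
Proof.
move=> indS xS yS uS xy ecx ecy ecu; apply/negPn/negP; rewrite !inE negb_or.
move=> /andP [ux uy]; move: (claw ecx ecy ecu xy).
rewrite eq_sym ux eq_sym uy => /(_ isT isT).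
by rewrite (negbTE (indS _ _ xS yS)) (negbTE (indS _ _ xS uS)) (negbTE (indS _ _ yS uS)).
Qed.

Lemma claw_free_nbr_adj x a b v :
  e x a -> e x b -> ~~ e a b -> a != b -> e x v -> v != a -> v != b ->
  e v a || e v b.
Proof.
move=> exa exb nab ab exv va vb.
by move: (claw exv exa exb va vb ab); rewrite (negbTE nab) orbF.
Qed.

Section Pack2Exchange.

Variables (I D : {set T}) (a b x y : T).
Hypotheses (indI : independent e I) (aI : a \in I) (bI : b \in I) (ab : a != b).
Hypotheses (indD : independent e D) (domD : dominating e D).
Hypotheses (xD : x \in D) (yD : y \in D) (xy : x != y).
Hypotheses (xX : x \in pack2 e I a b) (yX : y \in pack2 e I a b).

Lemma pack2_adj v q : v \in pack2 e I a b -> q \in [set a; b] -> e v q.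
Proof.
move=> /mem_pack2 [_ vN] qab; rewrite vN //.
by case/set2P: qab => ->.
Qed.

Lemma pack2_exchange_independent : independent e (D :\: [set x; y] :|: [set a; b]).
Proof.
apply: independentU.
- exact: independentS (subsetDl D [set x; y]) indD.
- by apply: independentS indI; apply/subsetP => q /set2P [] ->.
move=> p q; rewrite inE => /andP [pxy pD] qab; apply: contra pxy => epq.
apply: (@claw_free_independent_nbrs D q x y p indD) => //;
  by rewrite e_sym // pack2_adj.
Qed.

Lemma pack2_exchange_dominating : dominating e (D :\: [set x; y] :|: [set a; b]).
Proof.
move=> v; rewrite inE negb_or => /andP [vD' vab].
have adj_a u : u \in [set x; y] -> e u a.
  by case/set2P=> ->; apply: pack2_adj; rewrite ?set21.
have adj_b u : u \in [set x; y] -> e u b.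
  by case/set2P=> ->; apply: pack2_adj; rewrite ?set22.
have aD' : a \in D :\: [set x; y] :|: [set a; b] by rewrite inE set21 orbT.
have bD' : b \in D :\: [set x; y] :|: [set a; b] by rewrite inE set22 orbT.
have [vD | vND] := boolP (v \in D).
  have vxy : v \in [set x; y] by move: vD'; rewrite inE vD andbT negbK.
  by exists a; last exact: adj_a.
have [u uD evu] := domD vND.
have [uxy | uNxy] := boolP (u \in [set x; y]); last first.
  by exists u; rewrite // inE inE uNxy uD.
have [va vb] : v != a /\ v != b by move: vab; rewrite !inE negb_or => /andP.
have nab : ~~ e a b by apply: indI.
have euv : e u v by rewrite e_sym.
have /orP [eva | evb] := claw_free_nbr_adj (adj_a _ uxy) (adj_b _ uxy) nab ab euv va vb.
  by exists a.
by exists b.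
Qed.

End Pack2Exchange.

End IndependentSets.

Theorem lemma8 (T : finType) (e : rel T) (I D X : {set T}) :
  simple_graph e -> claw_free e -> maximum_independent e I ->
  min_independent_dominating e D -> is_pack e I X -> 1 < #|D :&: X| ->
  exists D' : {set T}, min_independent_dominating e D' /\ D' :&: I != set0.
Proof.
move=> [e_sym e_irr] claw maxI [[indD domD] minD] packX.
case/card_gt1P=> [x [y [/setIP [xD xX] /setIP [yD yX] xy]]].
have nxy : ~~ e x y by apply: indD.
case: packX => [[a [b [aI bI ab XE]]] | [a aI XE]]; subst X; last first.
  by rewrite (pack1_clique e_sym e_irr maxI aI xX yX xy) in nxy.
have [indI _] := maxI.
exists (D :\: [set x; y] :|: [set a; b]); split; last first.
  by apply/set0Pn; exists a; rewrite !inE eqxx aI orbT.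
split; first split.
- exact: (pack2_exchange_independent e_sym claw indI aI bI indD xD yD xy xX yX).
- exact: (pack2_exchange_dominating e_sym claw indI aI bI ab domD xX yX).
- by move=> S' /minD; apply: leq_trans (card_exchange2 a b xD yD xy).
Qed.
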